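(* In a generalised differential Seely category, for every morphism $(f,u):(X,A)\to(Y,B)$ of $LS(\mathscr C)$, $\mathrm D_2(⦃(f,u)⦄)=\pi_1^*(\mathrm{id}_X,u);⦃(f,u)⦄^*i^{Y,\mathcal U(B)}_2$, where $\pi_1:X\times\mathcal U(A)\to X$ and $(\mathrm{id}_X,u):(X,A)\to(X,B)$ is regarded as a morphism of the fibre over $X$.
   Context: Composition is diagrammatic; monoidal categories are strict. Setting: an LNL adjunction $\mathcal F\dashv\mathcal U$, $\mathcal F:\mathscr C\to\mathcal L$, between cartesian $(\mathscr C,\times,I)$ and symmetric monoidal $(\mathcal L,\otimes,1)$; $\mathcal U$ lax monoidal via $n_{A,B}:\mathcal U(A)\times\mathcal U(B)\to\mathcal U(A\otimes B)$; $\mathcal F$ strong monoidal via isomorphisms $m_{X,Y}$, $m_1$; unit $\eta$; $\mathbf c_X:=\mathcal F(\Delta_X);m_{X,X}^{-1}$, $\mathbf w_X:=\mathcal F(t_X);m_1^{-1}$. $LS(\mathscr C)$: objects $(X,A)$; morphisms $(f,u):(X,A)\to(Y,B)$ with $f:X\to Y$, $u:\mathcal F(X)\otimes A\to B$; composition $(f,u);(g,v)=(f;g,(\mathbf c_X\otimes\mathrm{id}_A);(\mathcal F(f)\otimes u);v)$; identity $(\mathrm{id}_X,\mathbf w_X\otimes\mathrm{id}_A)$; $\mathbf{ls}(f,u)=f$; fibre over $X$ = morphisms $(\mathrm{id}_X,u)$; reindexing along $h:X'\to X$: $h^*(X,B)=(X',B)$, $h^*(\mathrm{id}_X,v)=(\mathrm{id}_{X'},(\mathcal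 F(h)\otimes\mathrm{id}_B);v)$. With biproducts $\oplus$ in $\mathcal L$: fibrewise injections $\iota^X_i=(\mathrm{id}_X,\mathbf w_X\otimes\iota_i)$; products in $LS(\mathscr C)$: $(X\times Y,A\oplus B)$ with projections $(\pi_i,\mathbf w_{X\times Y}\otimes\pi_i)$. GDSC: $\mathcal L$ additive (CMon-enriched, $\otimes$ bilinear) with finite products, and a functor $\mathcal T:\mathscr C\to LS(\mathscr C)$ with: (t.1) $\mathbf{ls}\circ\mathcal T=\mathrm{id}$, so $\mathcal T(X)=(X,\lambda(X))$, and $\varphi_{X,Y}:=\langle\mathcal T(\pi_1),\mathcal T(\pi_2)\rangle:\mathcal T(X\times Y)\to(X\times Y,\lambda(X)\oplus\lambda(Y))$ is an isomorphism; (t.2) $\mathcal T(\mathcal U(A))=(\mathcal U(A),A)$; (t.3) with $i^{X,Y}_2:=\iota^{X\times Y}_2;\varphi^{-1}_{X,Y}:(X\times Y,\lambda(Y))\to\mathcal T(X\times Y)$, comprehension $⦃(f,u)⦄:=\langle\pi_1;f,(\eta_X\times\mathrm{id}_{\mathcal U(A)});n_{\mathcal F(X),A};\mathcal U(u)\rangle:X\times\mathcal U(A)\to Y\times\mathcal U(B)$, weakening $W(f,u):=(⦃(f,u)⦄,(\mathcal F(\pi_1)\otimes\mathrm{id}_A);u):(X\times\mathcal U(A),A)\to(Y\times\mathcal U(B),B)$: $W(f,u);i^{Y,\mathcal U(B)}_2=i^{X,\mathcal U(A)}_2;\mathcal T(⦃(f,u)⦄)$. Differential: for $g:X\to Y$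 with $\mathcal T(g)=(g,v)$, $\mathrm D(g):=(\mathrm{id}_X,v):(X,\lambda(X))\to(X,\lambda(Y))$. Partial differential: for $g:X\times Y\to Z$, $\mathrm D_2(g):=i^{X,Y}_2;\mathrm D(g):(X\times Y,\lambda(Y))\to(X\times Y,\lambda(Z))$. *)

Set Implicit Arguments.
Unset Strict Implicit.

Record category := Category {
  ob :> Type;
  hom : ob -> ob -> Type;
  idm : forall a, hom a a;
  comp : forall a b c, hom a b -> hom b c -> hom a c;
  comp_idl : forall a b (f : hom a b), comp (idm a) f = f;
  comp_idr : forall a b (f : hom a b), comp f (idm b) = f;
  comp_assoc : forall a b c d (f : hom a b) (g : hom b c) (h : hom c d),
      comp (comp f g) h = comp f (comp g h) }.

Arguments hom {_} _ _.
Arguments idm {_} _.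
Arguments comp {_ _ _ _} _ _.

Notation "f >>> g" := (comp f g) (at level 40, left associativity).

Record LNL_data (C L : category) := LNLData {
  termC : C;
  tC : forall X : C, hom X termC;
  prodC : C -> C -> C;
  p1 : forall X Y : C, hom (prodC X Y) X;
  p2 : forall X Y : C, hom (prodC X Y) Y;
  pairC : forall Z X Y : C, hom Z X -> hom Z Y -> hom Z (prodC X Y);
  tens : L -> L -> L;
  tensm : forall A A' B B' : L, hom A A' -> hom B B' -> hom (tens A B) (tens A' B');
  unitL : L;
  assoc : forall A B D : L, hom (tens (tens A B) D) (tens A (tens B D));
  associnv : forall A B D : L, hom (tens A (tens B D)) (tens (tens A B) D);
  lunit : forall A : L, hom (tens unitL A) A;
  lunitinv : forall A : L, hom A (tens unitL A);
  runit : forall A : L, hom (tens A unitL) A;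
  runitinv : forall A : L, hom A (tens A unitL);
  sym : forall A B : L, hom (tens A B) (tens B A);
  zerom : forall A B : L, hom A B;
  addm : forall A B : L, hom A B -> hom A B -> hom A B;
  termL : L;
  tL : forall A : L, hom A termL;
  oplus : L -> L -> L;
  pr1 : forall A B : L, hom (oplus A B) A;
  pr2 : forall A B : L, hom (oplus A B) B;
  pairL : forall D A B : L, hom D A -> hom D B -> hom D (oplus A B);
  Fo : C -> L;
  Fm : forall X Y : C, hom X Y -> hom (Fo X) (Fo Y);
  Uo : L -> C;
  Um : forall A B : L, hom A B -> hom (Uo A) (Uo B);
  eta : forall X : C, hom X (Uo (Fo X));
  eps : forall A : L, hom (Fo (Uo A)) A;
  mm : forall X Y : C, hom (tens (Fo X) (Fo Y)) (Fo (prodC X Y));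
  mminv : forall X Y : C, hom (Fo (prodC X Y)) (tens (Fo X) (Fo Y));
  m1 : hom unitL (Fo termC);
  m1inv : hom (Fo termC) unitL;
  nn : forall A B : L, hom (prodC (Uo A) (Uo B)) (Uo (tens A B));
  n1 : hom termC (Uo unitL) }.

Arguments termC {C L} S : rename.  Arguments tC {C L} S X : rename.
Arguments prodC {C L} S X Y : rename.  Arguments p1 {C L} S X Y : rename.  Arguments p2 {C L} S X Y : rename.
Arguments pairC {C L} S {Z X Y} f g : rename.
Arguments tens {C L} S A B : rename.  Arguments tensm {C L} S {A A' B B'} f g : rename.
Arguments unitL {C L} S : rename.
Arguments assoc {C L} S A B D : rename.  Arguments associnv {C L} S A B D : rename.
Arguments lunit {C L} S A : rename.  Arguments lunitinv {C L} S A : rename.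
Arguments runit {C L} S A : rename.  Arguments runitinv {C L} S A : rename.
Arguments sym {C L} S A B : rename.
Arguments zerom {C L} S A B : rename.  Arguments addm {C L} S {A B} f g : rename.
Arguments termL {C L} S : rename.  Arguments tL {C L} S A : rename.
Arguments oplus {C L} S A B : rename.  Arguments pr1 {C L} S A B : rename.  Arguments pr2 {C L} S A B : rename.
Arguments pairL {C L} S {D A B} f g : rename.
Arguments Fo {C L} S X : rename.  Arguments Fm {C L} S {X Y} f : rename.
Arguments Uo {C L} S A : rename.  Arguments Um {C L} S {A B} f : rename.
Arguments eta {C L} S X : rename.  Arguments eps {C L} S A : rename.
Arguments mm {C L} S X Y : rename.  Arguments mminv {C L} S X Y : rename.
Arguments m1 {C L} S : rename.  Arguments m1inv {C L} S : rename.
Arguments nn {C L} S A B : rename.  Arguments n1 {C L} S : rename.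

Section LNLLaws.
Context {C L : category} (S : LNL_data C L).

Definition prodm {X X' Y Y' : C} (f : hom X X') (g : hom Y Y') :
  hom (prodC S X Y) (prodC S X' Y') :=
  pairC S (p1 S X Y >>> f) (p2 S X Y >>> g).
Definition diagC (X : C) : hom X (prodC S X X) := pairC S (idm X) (idm X).
Definition swapC (X Y : C) : hom (prodC S X Y) (prodC S Y X) :=
  pairC S (p2 S X Y) (p1 S X Y).
Definition assocC (X Y Z : C) :
  hom (prodC S (prodC S X Y) Z) (prodC S X (prodC S Y Z)) :=
  pairC S (p1 S _ _ >>> p1 S X Y) (pairC S (p1 S _ _ >>> p2 S X Y) (p2 S _ _)).

Local Notation "A ⊗ B" := (tens S A B) (at level 35).

Record LNL_laws : Prop := {
  tC_uniq : forall X (h : hom X (termC S)), h = tC S X;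
  pairC_p1 : forall Z X Y (f : hom Z X) (g : hom Z Y), pairC S f g >>> p1 S X Y = f;
  pairC_p2 : forall Z X Y (f : hom Z X) (g : hom Z Y), pairC S f g >>> p2 S X Y = g;
  pairC_uniq : forall Z X Y (h : hom Z (prodC S X Y)),
      h = pairC S (h >>> p1 S X Y) (h >>> p2 S X Y);
  tens_id : forall A B : L, tensm S (idm A) (idm B) = idm (A ⊗ B);
  tens_comp : forall (A A' A'' B B' B'' : L) (f : hom A A') (f' : hom A' A'')
      (g : hom B B') (g' : hom B' B''),
      tensm S (f >>> f') (g >>> g') = tensm S f g >>> tensm S f' g';
  assoc_iso1 : forall A B D, assoc S A B D >>> associnv S A B D = idm _;
  assoc_iso2 : forall A B D, associnv S A B D >>> assoc S A B D = idm _;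
  assoc_nat : forall A A' B B' D D' (f : hom A A') (g : hom B B') (h : hom D D'),
      tensm S (tensm S f g) h >>> assoc S A' B' D' = assoc S A B D >>> tensm S f (tensm S g h);
  lunit_iso1 : forall A, lunit S A >>> lunitinv S A = idm _;
  lunit_iso2 : forall A, lunitinv S A >>> lunit S A = idm _;
  lunit_nat : forall A B (f : hom A B), tensm S (idm (unitL S)) f >>> lunit S B = lunit S A >>> f;
  runit_iso1 : forall A, runit S A >>> runitinv S A = idm _;
  runit_iso2 : forall A, runitinv S A >>> runit S A = idm _;
  runit_nat : forall A B (f : hom A B), tensm S f (idm (unitL S)) >>> runit S B = runit S A >>> f;
  pentagon : forall A B D E,
      tensm S (assoc S A B D) (idm E) >>> assoc S A (B ⊗ D) E >>> tensm S (idm A) (assoc S B D E)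
      = assoc S (A ⊗ B) D E >>> assoc S A B (D ⊗ E);
  triangle : forall A B,
      assoc S A (unitL S) B >>> tensm S (idm A) (lunit S B) = tensm S (runit S A) (idm B);
  sym_nat : forall A A' B B' (f : hom A A') (g : hom B B'),
      tensm S f g >>> sym S A' B' = sym S A B >>> tensm S g f;
  sym_inv : forall A B, sym S A B >>> sym S B A = idm _;
  hexagon : forall A B D,
      assoc S A B D >>> sym S A (B ⊗ D) >>> assoc S B D A
      = tensm S (sym S A B) (idm D) >>> assoc S B A D >>> tensm S (idm B) (sym S A D);
  add_assoc : forall A B (f g h : hom A B), addm S (addm S f g) h = addm S f (addm S g h);
  add_comm : forall A B (f g : hom A B), addm S f g = addm S g f;
  add_0l : forall A B (f : hom A B), addm S (zerom S A B) f = f;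
  comp_addl : forall A B D (f g : hom A B) (h : hom B D),
      addm S f g >>> h = addm S (f >>> h) (g >>> h);
  comp_addr : forall A B D (h : hom A B) (f g : hom B D),
      h >>> addm S f g = addm S (h >>> f) (h >>> g);
  comp_0l : forall A B D (h : hom B D), zerom S A B >>> h = zerom S A D;
  comp_0r : forall A B D (h : hom A B), h >>> zerom S B D = zerom S A D;
  tens_addl : forall A A' B B' (f g : hom A A') (h : hom B B'),
      tensm S (addm S f g) h = addm S (tensm S f h) (tensm S g h);
  tens_addr : forall A A' B B' (h : hom A A') (f g : hom B B'),
      tensm S h (addm S f g) = addm S (tensm S h f) (tensm S h g);
  tens_0l : forall A A' B B' (h : hom B B'), tensm S (zerom S A A') h = zerom S _ _;
  tens_0r : forall A A' B B' (h : hom A A'), tensm S h (zerom S B B') = zerom S _ _;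
  tL_uniq : forall A (h : hom A (termL S)), h = tL S A;
  pairL_pr1 : forall D A B (f : hom D A) (g : hom D B), pairL S f g >>> pr1 S A B = f;
  pairL_pr2 : forall D A B (f : hom D A) (g : hom D B), pairL S f g >>> pr2 S A B = g;
  pairL_uniq : forall D A B (h : hom D (oplus S A B)),
      h = pairL S (h >>> pr1 S A B) (h >>> pr2 S A B);
  Fm_id : forall X, Fm S (idm X) = idm (Fo S X);
  Fm_comp : forall X Y Z (f : hom X Y) (g : hom Y Z), Fm S (f >>> g) = Fm S f >>> Fm S g;
  Um_id : forall A, Um S (idm A) = idm (Uo S A);
  Um_comp : forall A B D (f : hom A B) (g : hom B D), Um S (f >>> g) = Um S f >>> Um S g;
  eta_nat : forall X Y (f : hom X Y), f >>> eta S Y = eta S X >>> Um S (Fm S f);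
  eps_nat : forall A B (h : hom A B), Fm S (Um S h) >>> eps S B = eps S A >>> h;
  triangle1 : forall X, Fm S (eta S X) >>> eps S (Fo S X) = idm _;
  triangle2 : forall A, eta S (Uo S A) >>> Um S (eps S A) = idm _;
  mm_iso1 : forall X Y, mm S X Y >>> mminv S X Y = idm _;
  mm_iso2 : forall X Y, mminv S X Y >>> mm S X Y = idm _;
  m1_iso1 : m1 S >>> m1inv S = idm _;
  m1_iso2 : m1inv S >>> m1 S = idm _;
  mm_nat : forall X X' Y Y' (f : hom X X') (g : hom Y Y'),
      tensm S (Fm S f) (Fm S g) >>> mm S X' Y' = mm S X Y >>> Fm S (prodm f g);
  mm_assoc : forall X Y Z,
      tensm S (mm S X Y) (idm (Fo S Z)) >>> mm S (prodC S X Y) Z >>> Fm S (assocC X Y Z)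
      = assoc S _ _ _ >>> tensm S (idm (Fo S X)) (mm S Y Z) >>> mm S X (prodC S Y Z);
  mm_lunit : forall X,
      tensm S (m1 S) (idm (Fo S X)) >>> mm S (termC S) X >>> Fm S (p2 S (termC S) X)
      = lunit S (Fo S X);
  mm_runit : forall X,
      tensm S (idm (Fo S X)) (m1 S) >>> mm S X (termC S) >>> Fm S (p1 S X (termC S))
      = runit S (Fo S X);
  mm_sym : forall X Y, sym S (Fo S X) (Fo S Y) >>> mm S Y X = mm S X Y >>> Fm S (swapC X Y);
  nn_nat : forall A A' B B' (f : hom A A') (g : hom B B'),
      prodm (Um S f) (Um S g) >>> nn S A' B' = nn S A B >>> Um S (tensm S f g);
  nn_assoc : forall A B D,
      prodm (nn S A B) (idm (Uo S D)) >>> nn S (A ⊗ B) D >>> Um S (assoc S A B D)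
      = assocC (Uo S A) (Uo S B) (Uo S D) >>> prodm (idm (Uo S A)) (nn S B D) >>> nn S A (B ⊗ D);
  nn_lunit : forall A,
      prodm (n1 S) (idm (Uo S A)) >>> nn S (unitL S) A >>> Um S (lunit S A) = p2 S (termC S) (Uo S A);
  nn_runit : forall A,
      prodm (idm (Uo S A)) (n1 S) >>> nn S A (unitL S) >>> Um S (runit S A) = p1 S (Uo S A) (termC S);
  nn_sym : forall A B, swapC (Uo S A) (Uo S B) >>> nn S B A = nn S A B >>> Um S (sym S A B);
  eta_mon : forall X Y,
      eta S (prodC S X Y) = prodm (eta S X) (eta S Y) >>> nn S (Fo S X) (Fo S Y) >>> Um S (mm S X Y);
  eta_mon1 : eta S (termC S) = n1 S >>> Um S (m1 S);
  eps_mon : forall A B,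
      mm S (Uo S A) (Uo S B) >>> Fm S (nn S A B) >>> eps S (A ⊗ B) = tensm S (eps S A) (eps S B);
  eps_mon1 : m1 S >>> Fm S (n1 S) >>> eps S (unitL S) = idm (unitL S) }.

End LNLLaws.

Section LS.
Context {C L : category} (S : LNL_data C L).

Local Notation "A ⊗ B" := (tens S A B) (at level 35).
Local Notation "X × Y" := (prodC S X Y) (at level 35).

(* comonoid structure on F X *)
Definition cC (X : C) : hom (Fo S X) (Fo S X ⊗ Fo S X) := Fm S (diagC S X) >>> mminv S X X.
Definition wC (X : C) : hom (Fo S X) (unitL S) := Fm S (tC S X) >>> m1inv S.

Definition LSHom (X : C) (A : L) (Y : C) (B : L) : Type :=
  (hom X Y * hom (Fo S X ⊗ A) B)%type.

Definition LScomp {X A Y B Z D} (m : LSHom X A Y B) (k : LSHom Y B Z D) : LSHom X A Z D :=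
  (fst m >>> fst k,
   tensm S (cC X) (idm A) >>> assoc S _ _ _ >>> tensm S (Fm S (fst m)) (snd m) >>> snd k).

Definition LSid (X : C) (A : L) : LSHom X A X A :=
  (idm X, tensm S (wC X) (idm A) >>> lunit S A).

(* the fibre morphism over X induced by h : A -> B in L, i.e. (id_X, w_X ⊗ h) *)
Definition fib (X : C) {A B : L} (h : hom A B) : LSHom X A X B :=
  (idm X, tensm S (wC X) h >>> lunit S B).

(* reindexing of a fibre morphism (id_X, v) along h : X' -> X *)
Definition reindex {X' X : C} (h : hom X' X) {A B : L} (m : LSHom X A X B) : LSHom X' A X' B :=
  (idm X', tensm S (Fm S h) (idm A) >>> snd m).

Definition injL2 (A B : L) : hom B (oplus S A B) := pairL S (zerom S B A) (idm B).

Definition LSpair {X A Y B Z D} (m : LSHom X A Y B) (k : LSHom X A Z D) :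
  LSHom X A (Y × Z) (oplus S B D) := (pairC S (fst m) (fst k), pairL S (snd m) (snd k)).

Definition compr {X Y : C} {A B : L} (f : hom X Y) (u : hom (Fo S X ⊗ A) B) :
  hom (X × Uo S A) (Y × Uo S B) :=
  pairC S (p1 S X (Uo S A) >>> f)
          (prodm S (eta S X) (idm (Uo S A)) >>> nn S (Fo S X) A >>> Um S u).

Definition Wk {X Y : C} {A B : L} (f : hom X Y) (u : hom (Fo S X ⊗ A) B) :
  LSHom (X × Uo S A) A (Y × Uo S B) B :=
  (compr f u, tensm S (Fm S (p1 S X (Uo S A))) (idm A) >>> u).

Definition Lcast {A B : L} (e : A = B) : hom A B :=
  match e in _ = B' return hom A B' with eq_refl => idm A end.

(* the functor T : C -> LS(C), T(X) = (X, lam X), T(g) = (g, Tm g) *)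
Record GDSC_data := GDSCData {
  lam : C -> L;
  Tm : forall X Y : C, hom X Y -> hom (Fo S X ⊗ lam X) (lam Y);
  (* (t.2) T(U A) = (U A, A) *)
  lamU : forall A : L, lam (Uo S A) = A;
  (* inverse of phi_{X,Y} (t.1) *)
  phinv : forall X Y : C, LSHom (X × Y) (oplus S (lam X) (lam Y)) (X × Y) (lam (X × Y)) }.

Context (G : GDSC_data).

Definition Tmor {X Y : C} (g : hom X Y) : LSHom X (lam G X) Y (lam G Y) := (g, Tm G g).

Definition LSproj1 (X Y : C) (A B : L) : LSHom (X × Y) (oplus S A B) X A :=
  (p1 S X Y, tensm S (wC (X × Y)) (pr1 S A B) >>> lunit S A).
Definition LSproj2 (X Y : C) (A B : L) : LSHom (X × Y) (oplus S A B) Y B :=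
  (p2 S X Y, tensm S (wC (X × Y)) (pr2 S A B) >>> lunit S B).

Definition phi (X Y : C) : LSHom (X × Y) (lam G (X × Y)) (X × Y) (oplus S (lam G X) (lam G Y)) :=
  LSpair (Tmor (p1 S X Y)) (Tmor (p2 S X Y)).

Definition i2 (X Y : C) : LSHom (X × Y) (lam G Y) (X × Y) (lam G (X × Y)) :=
  LScomp (fib (X × Y) (injL2 (lam G X) (lam G Y))) (phinv G X Y).

Definition Dmor {X Y : C} (g : hom X Y) : LSHom X (lam G X) X (lam G Y) := (idm X, Tm G g).
Definition D2 {X Y Z : C} (g : hom (X × Y) Z) : LSHom (X × Y) (lam G Y) (X × Y) (lam G Z) :=
  LScomp (i2 X Y) (Dmor g).

Definition castU (X : C) (A : L) : LSHom X A X (lam G (Uo S A)) :=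
  fib X (Lcast (eq_sym (lamU G A))).

Record GDSC_laws : Prop := {
  T_id : forall X : C, Tmor (idm X) = LSid X (lam G X);
  T_comp : forall (X Y Z : C) (f : hom X Y) (g : hom Y Z),
      Tmor (f >>> g) = LScomp (Tmor f) (Tmor g);
  phi_iso1 : forall X Y : C, LScomp (phi X Y) (phinv G X Y) = LSid _ _;
  phi_iso2 : forall X Y : C, LScomp (phinv G X Y) (phi X Y) = LSid _ _;
  (* (t.3) W(f,u) ; i_2 = i_2 ; T(compr (f,u)), modulo the identification (t.2) *)
  t3 : forall (X Y : C) (A B : L) (f : hom X Y) (u : hom (Fo S X ⊗ A) B),
      LScomp (LScomp (Wk f u) (castU (Y × Uo S B) B)) (i2 Y (Uo S B))
      = LScomp (LScomp (castU (X × Uo S A) A) (i2 X (Uo S A))) (Tmor (compr f u)) }.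

End LS.


(* Put g := ⦃(f,u)⦄.  Both sides are morphisms of the fibre over X × U A.  On
   the right, π₁^*(id, u) followed by the identification (t.2) is the fibre
   part of W(f,u), and following a fibre morphism (id, v) by the reindexing
   g^* k is the same as composing (g, v) with k; so the right-hand side is the
   fibre part of W(f,u) ; i₂, which by (t.3) is that of i₂ ; T(g).  Finally
   D(g) and T(g) differ only in their base component, which does not enter the
   fibre part of a composite.  The categorical input is that w is a counit of
   the comonoid c on F X, which makes the maps (id, w ⊗ h) act on
   LS-morphisms by plain composition with h. *)

Section Monoidal.
Context {C L : category} {S : LNL_data C L} (H : LNL_laws S).

Local Notation tm := (tensm S).
Local Notation "A ⊗ B" := (tens S A B) (at level 35).

Lemma tensm_idl_comp (A B B' B'' : L) (f : hom B B') (g : hom B' B'') :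
  tm (idm A) (f >>> g) = tm (idm A) f >>> tm (idm A) g.
Proof. now rewrite <- (tens_comp H), comp_idl. Qed.

Lemma tensm_idr_comp (A B B' B'' : L) (f : hom B B') (g : hom B' B'') :
  tm (f >>> g) (idm A) = tm f (idm A) >>> tm g (idm A).
Proof. now rewrite <- (tens_comp H), comp_idl. Qed.

Lemma tensm_unit_inj (B D : L) (f g : hom B D) :
  tm (idm (unitL S)) f = tm (idm (unitL S)) g -> f = g.
Proof.
  intro E.
  assert (conj_lunit : forall h : hom B D,
             h = lunitinv S B >>> (tm (idm (unitL S)) h >>> lunit S D)).
  { intro h. now rewrite (lunit_nat H), <- comp_assoc, (lunit_iso2 H), comp_idl. }
  now rewrite (conj_lunit f), (conj_lunit g), E.
Qed.

(* Kelly's coherence lemma. *)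
Lemma assoc_lunit (B D : L) :
  assoc S (unitL S) B D >>> lunit S (B ⊗ D) = tm (lunit S B) (idm D).
Proof.
  set (U := unitL S).
  apply tensm_unit_inj.
  set (Q := tm (assoc S U U B) (idm D) >>> assoc S U (U ⊗ B) D).
  set (Qi := associnv S U (U ⊗ B) D >>> tm (associnv S U U B) (idm D)).
  assert (Q_cancel : forall a b : hom (U ⊗ ((U ⊗ B) ⊗ D)) (U ⊗ (B ⊗ D)),
             Q >>> a = Q >>> b -> a = b).
  { assert (QiQ : Qi >>> Q = idm _).
    { unfold Q, Qi. rewrite !comp_assoc.
      rewrite <- (comp_assoc (tm (associnv S U U B) (idm D))).
      rewrite <- (tens_comp H), (assoc_iso2 H), comp_idl, (tens_id H), comp_idl.
      apply (assoc_iso2 H). }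
    intros a b E. rewrite <- (comp_idl a), <- (comp_idl b), <- QiQ.
    now rewrite !comp_assoc, E. }
  apply Q_cancel. transitivity (tm (tm (runit S U) (idm B)) (idm D) >>> assoc S U B D).
  - unfold Q. rewrite tensm_idl_comp, <- !comp_assoc, (pentagon H), !comp_assoc.
    now rewrite (triangle H), <- (tens_id H B D), <- (assoc_nat H).
  - unfold Q. rewrite comp_assoc, <- (assoc_nat H), <- comp_assoc.
    now rewrite <- (tens_comp H), (triangle H), comp_idl.
Qed.

Lemma prodm_p1 (X X' Y Y' : C) (f : hom X X') (g : hom Y Y') :
  prodm S f g >>> p1 S X' Y' = p1 S X Y >>> f.
Proof. apply (pairC_p1 H). Qed.

Lemma prodm_p2 (X X' Y Y' : C) (f : hom X X') (g : hom Y Y') :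
  prodm S f g >>> p2 S X' Y' = p2 S X Y >>> g.
Proof. apply (pairC_p2 H). Qed.

Lemma wC_nat (X Y : C) (g : hom X Y) : Fm S g >>> wC S Y = wC S X.
Proof.
  unfold wC. rewrite <- comp_assoc, <- (Fm_comp H).
  now rewrite ((tC_uniq H) _ (g >>> tC S Y)).
Qed.

Lemma cC_counit_r (X : C) : cC S X >>> tm (idm _) (wC S X) >>> runit S _ = idm _.
Proof.
  unfold cC, wC.
  rewrite <- (mm_runit H), tensm_idl_comp, !comp_assoc.
  rewrite <- (comp_assoc (tm (idm (Fo S X)) (m1inv S))).
  rewrite <- (tens_comp H), comp_idl, (m1_iso2 H), (tens_id H), comp_idl.
  rewrite <- (comp_assoc (tm (idm (Fo S X)) (Fm S (tC S X)))).
  rewrite <- (Fm_id H), (mm_nat H), comp_assoc, <- (Fm_comp H), prodm_p1, comp_idr.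
  rewrite <- (comp_assoc (mminv S X X)), (mm_iso2 H), comp_idl, <- (Fm_comp H).
  unfold diagC. now rewrite (pairC_p1 H).
Qed.

Lemma cC_counit_l (X : C) : cC S X >>> tm (wC S X) (idm _) >>> lunit S _ = idm _.
Proof.
  unfold cC, wC.
  rewrite <- (mm_lunit H), tensm_idr_comp, !comp_assoc.
  rewrite <- (comp_assoc (tm (m1inv S) (idm (Fo S X)))).
  rewrite <- (tens_comp H), comp_idl, (m1_iso2 H), (tens_id H), comp_idl.
  rewrite <- (comp_assoc (tm (Fm S (tC S X)) (idm (Fo S X)))).
  rewrite <- (Fm_id H), (mm_nat H), comp_assoc, <- (Fm_comp H), prodm_p2, comp_idr.
  rewrite <- (comp_assoc (mminv S X X)), (mm_iso2 H), comp_idl, <- (Fm_comp H).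
  unfold diagC. now rewrite (pairC_p2 H).
Qed.

Lemma cC_counit_l_tens (X : C) (A : L) :
  tm (cC S X) (idm A) >>> assoc S _ _ _ >>> tm (wC S X) (idm (Fo S X ⊗ A)) >>> lunit S _
  = idm _.
Proof.
  rewrite <- (tens_id H (Fo S X) A), (comp_assoc (tm (cC S X) (idm A))), <- (assoc_nat H).
  rewrite <- comp_assoc, <- (tens_comp H), comp_idl.
  now rewrite comp_assoc, assoc_lunit, <- (tens_comp H), comp_idl, cC_counit_l.
Qed.

Lemma LScomp_fib_l {P Z : C} {A A' D : L} (h : hom A A') (m : LSHom S P A' Z D) :
  LScomp (fib S P h) m = (fst m, tm (idm _) h >>> snd m).
Proof.
  unfold LScomp, fib; simpl. rewrite comp_idl, (Fm_id H). f_equal.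
  rewrite tensm_idl_comp, <- !comp_assoc; do 2 f_equal.
  rewrite (comp_assoc (tm (cC S P) (idm A))), <- (assoc_nat H), <- comp_assoc.
  rewrite <- (tens_comp H), comp_idl, comp_assoc, (triangle H), <- (tens_comp H), comp_idr.
  now rewrite cC_counit_r.
Qed.

Lemma LScomp_fib_r {X Y : C} {A B B' : L} (m : LSHom S X A Y B) (h : hom B B') :
  LScomp m (fib S Y h) = (fst m, snd m >>> h).
Proof.
  unfold LScomp, fib; simpl. rewrite comp_idr. f_equal.
  rewrite <- (comp_assoc _ (tm (wC S Y) h)), (comp_assoc _ (tm (Fm S (fst m)) (snd m))).
  rewrite <- (tens_comp H), wC_nat.
  rewrite <- (comp_idr (wC S X)), <- (comp_idl (snd m >>> h)), (tens_comp H).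
  rewrite !comp_assoc, (lunit_nat H), <- !comp_assoc.
  now rewrite cC_counit_l_tens, comp_idl.
Qed.

Lemma fib_LScompA {P Y Z : C} {A A' B D : L} (h : hom A A')
    (m : LSHom S P A' Y B) (k : LSHom S Y B Z D) :
  LScomp (fib S P h) (LScomp m k) = LScomp (LScomp (fib S P h) m) k.
Proof.
  rewrite !LScomp_fib_l. unfold LScomp; simpl. f_equal.
  rewrite !comp_assoc, <- (comp_assoc (tm (idm _) h)), <- (tens_comp H), comp_idl, comp_idr.
  replace (tm (Fm S (fst m)) (tm (idm _) h >>> snd m))
    with (tm (idm _) (tm (idm _) h) >>> tm (Fm S (fst m)) (snd m))
    by (now rewrite <- (tens_comp H), comp_idl).
  rewrite !comp_assoc, <- (comp_assoc (assoc S _ _ A) (tm (idm _) (tm (idm _) h))).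
  rewrite <- (assoc_nat H), (tens_id H), !comp_assoc.
  now rewrite <- (comp_assoc (tm (cC S P) (idm A))), <- (tens_comp H), comp_idl, comp_idr.
Qed.

Lemma LScomp_fibA {X Y Z : C} {A B B' D : L} (m : LSHom S X A Y B) (h : hom B B')
    (k : LSHom S Y B' Z D) :
  LScomp m (LScomp (fib S Y h) k) = LScomp (LScomp m (fib S Y h)) k.
Proof.
  rewrite LScomp_fib_l, LScomp_fib_r. unfold LScomp; simpl. f_equal.
  rewrite <- (comp_idr (Fm S (fst m))), (tens_comp H), comp_idr.
  now rewrite !comp_assoc.
Qed.

(* Reindexing along g is the cartesian lift of g: a morphism (g, v) factors as
   the fibre morphism (id, v) followed by g^*. *)
Lemma LScomp_reindex {P Q : C} {A B D : L} (g : hom P Q) (v : hom (Fo S P ⊗ A) B)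
    (k : LSHom S Q B Q D) :
  LScomp ((idm P, v) : LSHom S P A P B) (reindex g k)
  = (idm P, snd (LScomp ((g, v) : LSHom S P A Q B) k)).
Proof.
  unfold LScomp, reindex; simpl. rewrite comp_idl, (Fm_id H). f_equal.
  now rewrite !comp_assoc, <- (comp_assoc (tm (idm _) v)), <- (tens_comp H), comp_idl, comp_idr.
Qed.

End Monoidal.

Section Differential.
Context {C L : category} {S : LNL_data C L} (H : LNL_laws S).
Context {G : GDSC_data S} (HG : GDSC_laws G).

Lemma phinv_fst (X Y : C) : fst (phinv G X Y) = idm _.
Proof.
  pose proof (f_equal fst (phi_iso1 HG X Y)) as E; simpl in E.
  rewrite <- (comp_idl (p1 S X Y)), <- (comp_idl (p2 S X Y)) in E.
  now rewrite <- (pairC_uniq H), comp_idl in E.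
Qed.

Lemma i2_fst (X Y : C) : fst (i2 G X Y) = idm _.
Proof. unfold i2; simpl. now rewrite phinv_fst, comp_idl. Qed.

Lemma D2_fst {X Y Z : C} (g : hom (prodC S X Y) Z) : fst (D2 G g) = idm _.
Proof. unfold D2, LScomp. cbn [fst]. now rewrite i2_fst, comp_idl. Qed.

Lemma snd_LScomp_Dmor {P X Y : C} {A : L} (m : LSHom S P A X (lam G X)) (g : hom X Y) :
  snd (LScomp m (Dmor G g)) = snd (LScomp m (Tmor G g)).
Proof. reflexivity. Qed.

End Differential.

Theorem proposition4p16 :
  forall (C L : category) (S : LNL_data C L), LNL_laws S ->
  forall G : GDSC_data S, GDSC_laws G ->
  forall (X Y : C) (A B : L) (f : hom X Y) (u : hom (tens S (Fo S X) A) B),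
    LScomp (castU G (prodC S X (Uo S A)) A) (D2 G (compr (S := S) f u))
    = LScomp (reindex (p1 S X (Uo S A)) ((idm X, u) : LSHom S X A X B))
        (LScomp (castU G (prodC S X (Uo S A)) B)
           (reindex (compr (S := S) f u) (i2 G Y (Uo S B)))).
Proof.
  intros C L S H G HG X Y A B f u.
  unfold castU.
  assert (Wk_castU := LScomp_fib_r H (Wk f u) (Lcast (eq_sym (lamU G B)))).
  simpl in Wk_castU.
  rewrite (LScomp_fibA H), (LScomp_fib_r H); simpl.
  rewrite (LScomp_reindex H), <- Wk_castU, (t3 HG).
  rewrite (LScomp_fib_l H), (D2_fst H HG). f_equal.
  unfold castU, D2. now rewrite <- snd_LScomp_Dmor, <- (fib_LScompA H), (LScomp_fib_l H).
Qed.
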